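(* Let $\mathbb{C}^{1,n+1}$ be a complex vector space with basis $p_1,e_1,\dots,e_n,q_1$ and pseudo-Hermitian metric $g$ of signature $(1,n+1)$ with $g(p_1,q_1)=1$, $g(e_i,e_j)=\delta_{ij}$ and all other values on basis vectors zero. Let $\tilde E=\mathrm{span}_{\mathbb{C}}\{e_1,\dots,e_n\}$, and let $U(1,n+1)_{\mathbb{C}p_1}$ be the group of $g$-preserving complex linear automorphisms of $\mathbb{C}^{1,n+1}$ preserving the line $\mathbb{C}p_1$. For every $f\in U(1,n+1)_{\mathbb{C}p_1}$ let $\phi_f:\tilde E\to\tilde E$ be the map defined by $w(f(\ell))=\phi_f(w(\ell))$ for every isotropic complex line $\ell\neq\mathbb{C}p_1$ (see context). Let $G\subset U(1,n+1)_{\mathbb{C}p_1}$ be a subgroup that acts weakly irreducibly on $\mathbb{C}^{1,n+1}$, and let $F=\{\phi_f: f\in G\}$. Then: (1) $F$ does not preserve any proper complex affine subspace of $\tilde E$; (2) if $F$ preserves a proper affine subspace $L\subset\tilde E$ that is not complex, then the minimal complex affine subspace of $\tilde E$ containing $L$ is $\tilde E$.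
   Context: Every isotropic complex line $\ell\neq\mathbb{C}p_1$ contains a unique vector of the form $tp_1+w+q_1$ with $t\in\mathbb{C}$, $w\in\tilde E$; set $w(\ell)=w$. Every $w\in\tilde E$ arises this way. Each $f\in U(1,n+1)_{\mathbb{C}p_1}$ maps isotropic lines to isotropic lines and fixes $\mathbb{C}p_1$, and $w(f(\ell))$ depends only on $w(\ell)$, so $\phi_f$ is well defined; it is a similarity transformation of the Hermitian space $\tilde E$ (of the form $w\mapsto\mu Aw+b$ with $\mu\in\mathbb{C}^*$, $A$ unitary, $b\in\tilde E$). (This is the composition of the paper's homomorphism $\Gamma$ to the Heisenberg similarity group with the projection $\pi$ to $\mathrm{Sim}\,\tilde E$.) $G$ acts weakly irreducibly on $\mathbb{C}^{1,n+1}$ if it preserves no proper nonzero complex subspace on which $g$ is nondegenerate. An affine subspace of $\tilde E$ (viewed as real affine space) is called complex if its underlying real vector subspace is invariant under multiplication by $i$. *)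

From HB Require Import structures.
From mathcomp Require Import all_boot all_order all_algebra.
From mathcomp Require Import complex.
From mathcomp Require Import reals.
Set Implicit Arguments. Unset Strict Implicit. Unset Printing Implicit Defensive.
Import Order.TTheory GRing.Theory Num.Theory.
Local Open Scope ring_scope.

(* The space C^{1,n+1} is 'rV[R[i]]_(1 + n + 1), a row vector
   v = row_mx (row_mx (p-coordinate) (E~-part)) (q-coordinate), i.e. coordinates
   with respect to the basis p_1, e_1, ..., e_n, q_1.
   Linear maps act on the right: f : 'M_(1+n+1), v |-> v *m f. *)

Section Defs.
Variables (R : realType) (n : nat).
Local Notation C := R[i].
Local Notation V := 'rV[C]_(1 + n + 1).
Local Notation E := 'rV[C]_n.

Definition pco (v : V) : C := lsubmx (lsubmx v) 0 0.
Definition eco (v : V) : E := rsubmx (lsubmx v).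
Definition qco (v : V) : C := rsubmx v 0 0.

Definition mkV (t : C) (w : E) (s : C) : V :=
  row_mx (row_mx (const_mx t : 'rV_1) w) (const_mx s : 'rV_1).

Definition p1 : V := mkV 1 0 0.
Definition q1 : V := mkV 0 0 1.

Definition gform (u v : V) : C :=
  pco u * (qco v)^* + qco u * (pco v)^* +
  \sum_(i < n) eco u 0 i * (eco v 0 i)^*.

Definition in_U_Cp1 (f : 'M[C]_(1 + n + 1)) : Prop :=
  [/\ f \in unitmx,
      (forall u v : V, gform (u *m f) (v *m f) = gform u v)
    & (p1 *m f :=: p1)%MS].

Definition subgroup_U (G : 'M[C]_(1 + n + 1) -> Prop) : Prop :=
  [/\ G 1%:M,
      (forall f h, G f -> G h -> G (f *m h)),
      (forall f, G f -> G (invmx f))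
    & (forall f, G f -> in_U_Cp1 f)].

Definition nondeg_on (W : 'M[C]_(1 + n + 1)) : Prop :=
  forall u : V, (u <= W)%MS ->
    (forall v : V, (v <= W)%MS -> gform u v = 0) -> u = 0.

Definition weakly_irreducible (G : 'M[C]_(1 + n + 1) -> Prop) : Prop :=
  forall W : 'M[C]_(1 + n + 1),
    (forall f, G f -> (W *m f <= W)%MS) -> nondeg_on W ->
    \rank W = 0%N \/ \rank W = (1 + n + 1)%N.

(* w(l) for the line spanned by a vector v with qco v <> 0:
   the unique vector of the line of the form t p1 + w + q1 has w = w(l) *)
Definition wline (v : V) : E := (qco v)^-1 *: eco v.

(* the vector -(|w|^2/2) p1 + w + q1: the unique vector of the form
   t p1 + w + q1 lying on an isotropic line *)
Definition isovec (w : E) : V :=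
  mkV (- ((\sum_(i < n) w 0 i * (w 0 i)^*) / 2%:R)) w 1.

(* phi_f (w(l)) = w(f(l)) *)
Definition phi (f : 'M[C]_(1 + n + 1)) (w : E) : E := wline (isovec w *m f).

Definition real_subspace (W : E -> Prop) : Prop :=
  [/\ W 0,
      (forall x y, W x -> W y -> W (x + y))
    & (forall (r : R) x, W x -> W ((r%:C)%C *: x))].

Definition affine_with_dir (L W : E -> Prop) : Prop :=
  real_subspace W /\ exists a : E, forall x, L x <-> exists y, W y /\ x = a + y.

Definition affine_subspace (L : E -> Prop) : Prop :=
  exists W, affine_with_dir L W.

Definition complex_affine_subspace (L : E -> Prop) : Prop :=
  exists W, affine_with_dir L W /\ (forall x, W x -> W ((Complex 0 1 : C) *: x)).

Definition proper_aff (L : E -> Prop) : Prop := exists x, ~ L x.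

Definition preserves (h : E -> E) (L : E -> Prop) : Prop :=
  forall x, L x -> L (h x).

Definition complex_affine_hull (L : E -> Prop) : E -> Prop :=
  fun x => forall A, complex_affine_subspace A -> (forall y, L y -> A y) -> A x.

End Defs.

From mathcomp Require Import all_boot all_order all_algebra.
From mathcomp Require Import complex.
From mathcomp Require Import reals.
From mathcomp Require Import ring.
From Stdlib Require Import Classical.
Set Implicit Arguments. Unset Strict Implicit. Unset Printing Implicit Defensive.
Import Order.TTheory GRing.Theory Num.Theory.
Local Open Scope ring_scope.

(* Let L = a + W be a real affine subspace of E~ preserved by every phi_f,
   f in G, and let W_C = W + iW.  The complex span S of p1 and of the isotropic
   vectors isovec x, x in L, consists of the vectors al p1 + (be a + y) + be q1
   with y in W_C.  As f maps isovec x to a multiple of isovec (phi_f x) modulo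
   p1, S is G-invariant.  It is also nondegenerate: a vector of S orthogonal
   to S has no q1-component (pair it with p1), then no E~-component (pair it
   with its own E~-part) and finally no p1-component (pair it with isovec a).
   Weak irreducibility forces S to be the whole space, hence x - a lies in W_C
   for every x.  If L is complex then W_C = W, so L = E~; in general every
   complex affine subspace containing L contains a + W_C = E~. *)

Lemma linear_pred_rowspace (K : fieldType) m (P : 'rV[K]_m -> Prop) :
  P 0 -> (forall u v, P u -> P v -> P (u + v)) -> (forall c v, P v -> P (c *: v)) ->
  exists M : 'M[K]_m, forall v, (v <= M)%MS <-> P v.
Proof.
move=> P0 PD PZ.
have grow d : exists M : 'M[K]_m, (forall u, (u <= M)%MS -> P u) /\
    ((forall v, P v -> (v <= M)%MS) \/ (d <= \rank M)%N).
  elim: d => [|d [M [MP [PM|rkM]]]].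
  - exists 0; split; last by right.
    by move=> u; rewrite submx0 => /eqP ->.
  - by exists M; split => //; left.
  - case: (classic (forall v, P v -> (v <= M)%MS)) => [PM|].
      by exists M; split => //; left.
    move=> /not_all_ex_not [v /(imply_to_and (P v)) [Pv vNM]].
    exists (M + v)%MS; split.
      move=> u /sub_addsmxP [[u1 u2] /= ->].
      apply: PD; first exact/MP/submxMl.
      by have /sub_rVP [c ->] := submxMl u2 v; apply: PZ.
    right; apply: leq_ltn_trans rkM _.
    suff: (M < M + v)%MS by rewrite ltmxErank => /andP [].
    rewrite ltmxE addsmxSl /=; apply/negP => vM.
    exact/vNM/(submx_trans _ vM)/addsmxSr.
have [M [MP [PM|rkM]]] := grow m.+1.
  by exists M => v; split; [apply: MP | apply: PM].
by move: (rank_leq_col M); rewrite leqNgt rkM.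
Qed.

Lemma sum_mul_conj_eq0 (K : numClosedFieldType) m (y : 'rV[K]_m) :
  \sum_(i < m) y 0 i * (y 0 i)^* = 0 -> y = 0.
Proof.
move=> /psumr_eq0P y0; apply/matrixP => i j; rewrite ord1 mxE.
have /eqP : y 0 j * (y 0 j)^* = 0 by apply: y0 => // k _; apply: mul_conjC_ge0.
by rewrite mul_conjC_eq0 => /eqP.
Qed.

Section Coordinates.
Variables (R : realType) (n : nat).
Local Notation C := R[i].
Local Notation V := 'rV[C]_(1 + n + 1).
Local Notation E := 'rV[C]_n.

Lemma pco_mkV t w s : pco (mkV t w s : V) = t.
Proof. by rewrite /pco /mkV !row_mxKl mxE. Qed.

Lemma eco_mkV t w s : eco (mkV t w s : V) = w.
Proof. by rewrite /eco /mkV row_mxKl row_mxKr. Qed.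

Lemma qco_mkV t w s : qco (mkV t w s : V) = s.
Proof. by rewrite /qco /mkV row_mxKr mxE. Qed.

Lemma mkV_coords (v : V) : mkV (pco v) (eco v) (qco v) = v.
Proof.
have const_mx00 (A : 'M[C]_1) : const_mx (A 0 0) = A.
  by apply/matrixP => i j; rewrite !mxE !ord1.
by rewrite /mkV /pco /eco /qco !const_mx00 !hsubmxK.
Qed.

Lemma mkV_add t1 w1 s1 t2 w2 s2 :
  (mkV t1 w1 s1 : V) + mkV t2 w2 s2 = mkV (t1 + t2) (w1 + w2) (s1 + s2).
Proof.
by rewrite /mkV !add_row_mx; congr row_mx; [congr row_mx|];
  apply/matrixP => i j; rewrite !mxE.
Qed.

Lemma mkV_scale c t w s : c *: (mkV t w s : V) = mkV (c * t) (c *: w) (c * s).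
Proof. by rewrite /mkV !scale_row_mx !scalemx_const. Qed.

Lemma mkV0 : (mkV 0 0 0 : V) = 0.
Proof. by rewrite -(scale0r (mkV 0 0 0 : V)) mkV_scale !mul0r scale0r. Qed.

Lemma p1_neq0 : p1 R n != 0.
Proof.
by apply/eqP => /(congr1 (@pco R n)); rewrite pco_mkV -mkV0 pco_mkV; exact/eqP/oner_neq0.
Qed.

Lemma gform_mkV t1 w1 s1 t2 w2 s2 :
  gform (mkV t1 w1 s1 : V) (mkV t2 w2 s2) =
  t1 * s2^* + s1 * t2^* + \sum_(i < n) w1 0 i * (w2 0 i)^*.
Proof. by rewrite /gform !pco_mkV !qco_mkV !eco_mkV. Qed.

Lemma gform_p1Z (v : V) t : gform v (t *: p1 R n) = qco v * t^*.
Proof.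
rewrite /p1 mkV_scale mulr1 mulr0 scaler0 -[v]mkV_coords gform_mkV qco_mkV.
rewrite conjC0 mulr0 add0r big1 ?addr0 // => i _.
by rewrite !mxE conjC0 mulr0.
Qed.

Lemma gform_p1 (v : V) : gform v (p1 R n) = qco v.
Proof. by rewrite -[p1 R n]scale1r gform_p1Z -[RHS]mulr1; congr (_ * _); apply: conjC1. Qed.

Lemma mkV_isovec_decomp (a y1 y2 : E) (al be : C) : exists ga : C,
  mkV al (be *: a + (y1 + 'i%C *: y2)) be = ga *: p1 R n + isovec (a + y1)
    + 'i%C *: isovec (a + y2) + (be - 1 - 'i%C) *: isovec a.
Proof.
pose nr (w : E) := - ((\sum_(i < n) w 0 i * (w 0 i)^*) / 2%:R).
exists (al - (nr (a + y1) + 'i%C * nr (a + y2) + (be - 1 - 'i%C) * nr a)).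
rewrite /isovec /p1 -!/(nr _) !mkV_scale !mkV_add; congr mkV; first by ring.
  by apply/matrixP => i j; rewrite !mxE; ring.
by ring.
Qed.

End Coordinates.

Section Complexification.
Variables (R : realType) (n : nat).
Local Notation C := R[i].
Local Notation E := 'rV[C]_n.

Definition complexification (W : E -> Prop) : E -> Prop :=
  fun y => exists y1 y2, [/\ W y1, W y2 & y = y1 + 'i%C *: y2].

Variable W : E -> Prop.
Hypothesis W_real : real_subspace W.

Lemma real_subspaceN x : W x -> W (- x).
Proof. by case: W_real => _ _ WZ Wx; rewrite -scaleN1r -(rmorphN1 (real_complex R)); apply: WZ. Qed.

Lemma complexification_sub y : W y -> complexification W y.
Proof. by case: W_real => W0 _ _ Wy; exists y, 0; rewrite scaler0 addr0. Qed.

Lemma complexification0 : complexification W 0.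
Proof. by case: W_real => W0 _ _; exact: complexification_sub. Qed.

Lemma complexificationD x y :
  complexification W x -> complexification W y -> complexification W (x + y).
Proof.
case: W_real => _ WD _ [x1 [x2 [Wx1 Wx2 ->]]] [y1 [y2 [Wy1 Wy2 ->]]].
by exists (x1 + y1), (x2 + y2); split; [exact: WD | exact: WD | rewrite scalerDr addrACA].
Qed.

Lemma complexificationZ (c : C) x :
  complexification W x -> complexification W (c *: x).
Proof.
case: W_real => _ WD WZ.
have WcR (r : R) y : complexification W y -> complexification W ((r%:C)%C *: y).
  case=> [y1 [y2 [Wy1 Wy2 ->]]]; exists ((r%:C)%C *: y1), ((r%:C)%C *: y2).
  by split; [exact: WZ | exact: WZ | rewrite scalerDr !scalerA mulrC].
have Wci y : complexification W y -> complexification W ('i%C *: y).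
  case=> [y1 [y2 [Wy1 Wy2 ->]]]; exists (- y2), y1; split => //.
    exact: real_subspaceN.
  by rewrite scalerDr scalerA -expr2 sqr_i scaleN1r addrC.
move=> Wx; rewrite [c]complexE scalerDl -scalerA.
by apply: complexificationD; [exact: WcR | exact/Wci/WcR].
Qed.

Lemma complexification_min (W' : E -> Prop) :
  real_subspace W' -> (forall x, W' x -> W' ('i%C *: x)) ->
  (forall y, W y -> W' y) -> forall y, complexification W y -> W' y.
Proof.
by case=> _ W'D _ W'i WW' y [y1 [y2 [Wy1 Wy2 ->]]]; apply: W'D; [exact: WW' | exact/W'i/WW'].
Qed.

End Complexification.

Section UnitaryMaps.
Variables (R : realType) (n : nat) (f : 'M[R[i]]_(1 + n + 1)).
Local Notation V := 'rV[R[i]]_(1 + n + 1).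
Hypothesis f_U : in_U_Cp1 f.

Lemma p1_mulmx : exists lam : R[i], p1 R n *m f = lam *: p1 R n.
Proof. by case: f_U => _ _ /eqmxP/andP [/sub_rVP]. Qed.

Lemma qco_mulmx_neq0 (u : V) : qco u != 0 -> qco (u *m f) != 0.
Proof.
case: f_U => _ f_iso _; have [lam flam] := p1_mulmx.
apply: contraNneq => quf0; have := f_iso u (p1 R n).
by rewrite flam gform_p1Z gform_p1 quf0 mul0r => /esym/eqP.
Qed.

Lemma isovec_mulmx (w : 'rV[R[i]]_n) :
  exists t s, s != 0 /\ isovec w *m f = mkV t (s *: phi f w) s.
Proof.
set v := isovec w *m f.
have qv : qco v != 0 by apply: qco_mulmx_neq0; rewrite qco_mkV oner_eq0.
exists (pco v), (qco v); split => //.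
by rewrite /phi /wline -/v scalerA divff // scale1r mkV_coords.
Qed.

End UnitaryMaps.

Section IsotropicSpan.
Variables (R : realType) (n : nat) (L W : 'rV[R[i]]_n -> Prop) (a : 'rV[R[i]]_n).
Local Notation V := 'rV[R[i]]_(1 + n + 1).
Hypotheses (W_real : real_subspace W) (L_def : forall x, L x <-> exists y, W y /\ x = a + y).

Definition isotropic_span : V -> Prop :=
  fun u => exists al be y, complexification W y /\ u = mkV al (be *: a + y) be.

Lemma isotropic_span0 : isotropic_span 0.
Proof.
by exists 0, 0, 0; split; [exact: complexification0 | rewrite scale0r addr0 mkV0].
Qed.

Lemma isotropic_spanD u v :
  isotropic_span u -> isotropic_span v -> isotropic_span (u + v).
Proof.
move=> [al1 [be1 [y1 [Wy1 ->]]]] [al2 [be2 [y2 [Wy2 ->]]]].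
exists (al1 + al2), (be1 + be2), (y1 + y2); split; first exact: complexificationD.
by rewrite mkV_add scalerDl addrACA.
Qed.

Lemma isotropic_spanZ c u : isotropic_span u -> isotropic_span (c *: u).
Proof.
move=> [al [be [y [Wy ->]]]].
exists (c * al), (c * be), (c *: y); split; first exact: complexificationZ.
by rewrite mkV_scale scalerDr scalerA.
Qed.

Lemma isotropic_span_p1 : isotropic_span (p1 R n).
Proof. by exists 1, 0, 0; split; [exact: complexification0 | rewrite scale0r addr0]. Qed.

Lemma isotropic_span_mulmx f u : in_U_Cp1 f -> preserves (phi f) L ->
  isotropic_span u -> isotropic_span (u *m f).
Proof.
move=> f_U f_L.
have [lam flam] := p1_mulmx f_U.
have span_isovec x : L x -> isotropic_span (isovec x *m f).
  have [t [s [_ ->]]] := isovec_mulmx f_U x.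
  move=> /f_L /L_def [y [Wy ->]].
  exists t, s, (s *: y); split; last by rewrite scalerDr.
  exact/complexificationZ/complexification_sub.
have L_a : L a by apply/L_def; exists 0; rewrite addr0; split => //; case: W_real.
have L_aW y : W y -> L (a + y) by move=> Wy; apply/L_def; exists y.
case=> al [be [_ [[y1 [y2 [Wy1 Wy2 ->]]] ->]]].
have [ga ->] := mkV_isovec_decomp a y1 y2 al be.
rewrite !mulmxDl -!scalemxAl flam.
apply: isotropic_spanD; first apply: isotropic_spanD; first apply: isotropic_spanD.
- exact/isotropic_spanZ/isotropic_spanZ/isotropic_span_p1.
- exact/span_isovec/L_aW.
- exact/isotropic_spanZ/span_isovec/L_aW.
- exact/isotropic_spanZ/span_isovec.
Qed.

Lemma isotropic_span_nondeg u : isotropic_span u ->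
  (forall v, isotropic_span v -> gform u v = 0) -> u = 0.
Proof.
case=> al [be [y [Wy ->]]] u_orth.
have be0 : be = 0 by have := u_orth _ isotropic_span_p1; rewrite gform_p1 qco_mkV.
have y0 : y = 0.
  have y_span : isotropic_span (mkV 0 y 0) by exists 0, 0, y; rewrite scale0r add0r.
  apply: sum_mul_conj_eq0; move: (u_orth _ y_span).
  by rewrite gform_mkV be0 scale0r add0r conjC0 !mulr0 !add0r.
have al0 : al = 0.
  have a_span : isotropic_span (mkV 0 a 1).
    by exists 0, 1, 0; split; [exact: complexification0 | rewrite scale1r addr0].
  move: (u_orth _ a_span); rewrite gform_mkV be0 y0 scale0r addr0 mul0r addr0.
  rewrite big1 => [|i _]; last by rewrite !mxE mul0r.
  by rewrite addr0 conjC1 mulr1.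
by rewrite al0 be0 y0 scale0r addr0 mkV0.
Qed.

Lemma preserved_affine_complexification_full (G : 'M[R[i]]_(1 + n + 1) -> Prop) :
  subgroup_U G -> weakly_irreducible G -> (forall f, G f -> preserves (phi f) L) ->
  forall x, complexification W (x - a).
Proof.
case=> _ _ _ G_U G_irr G_L x.
have [M M_span] : exists M : 'M_(1 + n + 1), forall v, (v <= M)%MS <-> isotropic_span v.
  apply: linear_pred_rowspace;
  [exact: isotropic_span0 | exact: isotropic_spanD | exact: isotropic_spanZ].
have M_inv f : G f -> (M *m f <= M)%MS.
  move=> Gf; apply/row_subP => i; rewrite row_mul.
  by apply/M_span/isotropic_span_mulmx; [exact: G_U | exact: G_L | exact/M_span/row_sub].
have M_nondeg : nondeg_on M.
  by move=> u /M_span u_span u_orth; apply: isotropic_span_nondeg => // v /M_span; exact: u_orth.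
case: (G_irr M M_inv M_nondeg) => [/eqP|] rkM.
  have /M_span := isotropic_span_p1.
  by move: rkM; rewrite mxrank_eq0 => /eqP ->; rewrite submx0 (negbTE (p1_neq0 R n)).
have /M_span [al [be [y [Wy e]]]] : (mkV 0 x 1 <= M)%MS.
  by apply: submx_full; rewrite /row_full rkM.
have := congr1 (@eco R n) e; have := congr1 (@qco R n) e; rewrite !eco_mkV !qco_mkV => <- ->.
by rewrite scale1r addrC addKr.
Qed.

End IsotropicSpan.

Lemma complex_affine_contains_complexification (R : realType) (n : nat)
    (L W A : 'rV[R[i]]_n -> Prop) (a : 'rV[R[i]]_n) :
  real_subspace W -> (forall x, L x <-> exists y, W y /\ x = a + y) ->
  complex_affine_subspace A -> (forall x, L x -> A x) ->
  forall y, complexification W y -> A (a + y).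
Proof.
move=> W_real L_def [W' [[W'_real [b A_def]] W'_i]] LA.
have W'D := let: And3 _ W'D _ := W'_real in W'D.
have L_aW y : W y -> L (a + y) by move=> Wy; apply/L_def; exists y.
have [y0 [W'y0 a_def]] : exists y0, W' y0 /\ a = b + y0.
  by apply/A_def/LA; rewrite -[a]addr0; apply/L_aW; case: W_real.
have WW' y : W y -> W' y.
  move=> /L_aW /LA /A_def [y' [W'y' e]].
  have -> : y = y' - y0 by apply: (addrI a); rewrite e a_def addrACA subrr addr0.
  by apply: W'D => //; apply: real_subspaceN.
move=> y Wy; apply/A_def; exists (y0 + y); split; last by rewrite a_def addrA.
by apply: W'D => //; apply: (complexification_min W'_real W'_i WW').
Qed.

Theorem theorem2p5p1 (R : realType) (n : nat)
  (G : 'M[R[i]]_(1 + n + 1) -> Prop) :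
  subgroup_U G -> weakly_irreducible G ->
  (forall L : 'rV[R[i]]_n -> Prop,
     complex_affine_subspace L -> proper_aff L ->
     ~ (forall f, G f -> preserves (phi f) L)) /\
  (forall L : 'rV[R[i]]_n -> Prop,
     affine_subspace L -> proper_aff L -> ~ complex_affine_subspace L ->
     (forall f, G f -> preserves (phi f) L) ->
     forall x, complex_affine_hull L x).
Proof.
move=> G_sub G_irr; split.
  move=> L [W [[W_real [a L_def]] W_i]] [x Lx] G_L; apply: Lx; apply/L_def.
  exists (x - a); split; last by rewrite addrC subrK.
  apply: (complexification_min W_real W_i (fun _ Wy => Wy)).
  exact: (preserved_affine_complexification_full W_real L_def G_sub G_irr G_L x).
move=> L [W [W_real [a L_def]]] _ _ G_L x A A_cplx LA.
rewrite -(subrK a x) addrC.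
apply: (complex_affine_contains_complexification W_real L_def A_cplx LA).
exact: (preserved_affine_complexification_full W_real L_def G_sub G_irr G_L x).
Qed.
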